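(* Consider CAV $i$ and CAV $i-1$ on different roads, in the safe-merging setting of the context, under (A1) and (SA). Let $t=t_i^0+k\Delta t$. Assume $v_i\ge 0$ at all times considered, and $u_{\min}\le 0$. Suppose that $b_{\eta_2}(t)\ge 0$, that QP$_2(t)$ is feasible, and that the control applied on $[t,t+\Delta t)$ is a feasible point of QP$_2(t)$. Then QP$_2(t+\Delta t)$ is also feasible.
   Context: **Vehicle model.** The vehicle dynamics are $\dot x_i=v_i$ and $\dot v_i=u_i$, where $x_i\in[0,L]$ is the distance travelled by CAV $i$ from the origin of its road, $v_i$ its speed and $u_i$ its acceleration (the control). The merging point is at position $L>0$ on each road. CAV $i-1$ is the CAV immediately ahead of $i$ in the first-in-first-out crossing order, travelling on the other road, with position $x_{i-1}$ (measured on its own road), speed $v_{i-1}$ and acceleration $u_{i-1}$, all known to CAV $i$. Let $z_{i,i-1}=x_{i-1}-x_i$, let $\varphi>0$, $\delta$ and $k_2>0$ be constants, and let $\varphi_2=\varphi/L$. **Control bounds.** Control bounds are $u_{\min}\le u_i\le u_{i,\max}$ with $u_{\min}<0<u_{i,\max}$. **(A1) Common minimum acceleration.** All CAVs share the same minimum acceleration $u_{\min}$. In particular $u_{i-1}(t)\ge u_{\min}$ for all $t$. **Functions of time:** - Merging safety function: $b_2=z_{i,i-1}-\varphi_2x_iv_i-\delta$. - CBF constraint: $b_{\mathrm{cbf}_2}(u_i)=v_{i-1}-v_i-\varphi_2v_i^2-\varphi_2x_iu_i+k_2b_2\ge0$. - Feasibility function: $b_F=v_{i-1}-v_i-\varphi_2v_i^2+k_2b_2-\varphi_2x_iu_{\min}$.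 - Auxiliary function: $b_{\eta_2}=v_{i-1}-v_i-\varphi_2v_i^2-\varphi_2x_iu_{\min}$. - Feasibility constraint: $\eta_2(u_i)=u_{i-1}-u_i-2\varphi_2v_iu_i-\varphi_2v_iu_{\min}+k_2 b_{\eta_2}\ge0$. Note that $\eta_2=\dot b_{\eta_2}+k_2b_{\eta_2}$ and $\dot b_F+k_2b_F=\eta_2+k_2b_{\mathrm{cbf}_2}$. **QP$_2(t)$.** QP$_2(t)$ is the quadratic program in the variables $(u_i,e_i)$ that minimizes $\beta e_i^2+\tfrac12(u_i-u_{\mathrm{ref}}(t))^2$ subject to: - $b_{\mathrm{cbf}_2}(u_i)\ge0$, - $u_{\min}\le u_i\le u_{i,\max}$, - $\eta_2(u_i)\ge0$, - a control Lyapunov constraint $c_1(t)+c_2(t)u_i\le e_i$ with a free slack variable $e_i$. All quantities are evaluated at time $t$. ''Feasible'' means the constraint set is nonempty. **(SA) Sampling / forward invariance.** The control is held constant on each $[t,t+\Delta t)$, and $\Delta t$ is small enough that for each $b\in\{b_2,b_F,b_{\eta_2}\}$: if $b(t)\ge0$ and $\dot b(t)+k_2b(t)\ge0$ under the applied controls, then $b(t+\Delta t)\ge0$. *)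

From Stdlib Require Import Reals Lra.
Open Scope R_scope.

(* Trajectories (functions of time s):
   xi vi   : position / speed of CAV i
   xp vp up: position / speed / acceleration of CAV i-1 (preceding CAV)
   phi2 = phi / L, k2, delta, umin constants. *)

Definition b2 (phi2 delta : R) (xi vi xp : R -> R) (s : R) : R :=
  (xp s - xi s) - phi2 * xi s * vi s - delta.

Definition bcbf2 (phi2 delta k2 : R) (xi vi xp vp : R -> R) (s ui : R) : R :=
  vp s - vi s - phi2 * (vi s)^2 - phi2 * xi s * ui + k2 * b2 phi2 delta xi vi xp s.

Definition bF (phi2 delta k2 umin : R) (xi vi xp vp : R -> R) (s : R) : R :=
  vp s - vi s - phi2 * (vi s)^2 + k2 * b2 phi2 delta xi vi xp s - phi2 * xi s * umin.

Definition beta2 (phi2 umin : R) (xi vi vp : R -> R) (s : R) : R :=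
  vp s - vi s - phi2 * (vi s)^2 - phi2 * xi s * umin.

Definition eta2 (phi2 k2 umin : R) (xi vi vp up : R -> R) (s ui : R) : R :=
  up s - ui - 2 * phi2 * vi s * ui - phi2 * vi s * umin + k2 * beta2 phi2 umin xi vi vp s.

Definition QP2_feasible (phi2 delta k2 umin uimax : R) (c1 c2 : R -> R)
    (xi vi xp vp up : R -> R) (s : R) : Prop :=
  exists ui ei : R,
    0 <= bcbf2 phi2 delta k2 xi vi xp vp s ui /\
    umin <= ui <= uimax /\
    0 <= eta2 phi2 k2 umin xi vi vp up s ui /\
    c1 s + c2 s * ui <= ei.

Definition QP2_feasible_point (phi2 delta k2 umin uimax : R) (c1 c2 : R -> R)
    (xi vi xp vp up : R -> R) (s ui : R) : Prop :=
  exists ei : R,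
    0 <= bcbf2 phi2 delta k2 xi vi xp vp s ui /\
    umin <= ui <= uimax /\
    0 <= eta2 phi2 k2 umin xi vi vp up s ui /\
    c1 s + c2 s * ui <= ei.

From Stdlib Require Import Reals Lra.
Open Scope R_scope.

(* At every sampling instant the control u_i = u_min is a feasible point of QP_2:
   b_cbf2(u_min) is exactly b_F, and eta_2(u_min) >= k2 b_eta2 because v_i >= 0,
   u_min <= 0 and u_{i-1} >= u_min.  So it suffices that b_F and b_eta2 stay
   nonnegative.  At time t the applied control u >= u_min gives
   b_F >= b_cbf2(u) >= 0, eta_2(u) >= 0 and b_cbf2(u) >= 0, which is exactly what
   (SA) needs to propagate b_F >= 0 and b_eta2 >= 0 to t + dt. *)

Section FeasibilityAtUmin.

Variables (phi2 delta k2 umin : R) (xi vi xp vp up : R -> R).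
Hypotheses (Hphi2 : 0 <= phi2) (Hk2 : 0 <= k2).

Lemma bcbf2_umin (s : R) :
  bcbf2 phi2 delta k2 xi vi xp vp s umin = bF phi2 delta k2 umin xi vi xp vp s.
Proof. unfold bcbf2, bF; ring. Qed.

Lemma bcbf2_le_bF (s u : R) :
  0 <= xi s -> umin <= u ->
  bcbf2 phi2 delta k2 xi vi xp vp s u <= bF phi2 delta k2 umin xi vi xp vp s.
Proof.
  intros Hx Hu; unfold bcbf2, bF.
  assert (0 <= phi2 * xi s * (u - umin)) by
    (apply Rmult_le_pos; [apply Rmult_le_pos|]; lra).
  lra.
Qed.

Lemma eta2_umin_nonneg (s : R) :
  umin <= 0 -> 0 <= vi s -> umin <= up s ->
  0 <= beta2 phi2 umin xi vi vp s ->
  0 <= eta2 phi2 k2 umin xi vi vp up s umin.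
Proof.
  intros Humin Hv Hup Hbeta; unfold eta2.
  assert (0 <= k2 * beta2 phi2 umin xi vi vp s) by (apply Rmult_le_pos; lra).
  assert (0 <= phi2 * vi s * (- umin)) by
    (apply Rmult_le_pos; [apply Rmult_le_pos|]; lra).
  lra.
Qed.

Lemma QP2_feasible_of_umin (uimax : R) (c1 c2 : R -> R) (s : R) :
  umin <= uimax ->
  0 <= bF phi2 delta k2 umin xi vi xp vp s ->
  0 <= eta2 phi2 k2 umin xi vi vp up s umin ->
  QP2_feasible phi2 delta k2 umin uimax c1 c2 xi vi xp vp up s.
Proof.
  intros Hmax HbF Heta.
  exists umin, (c1 s + c2 s * umin).
  rewrite bcbf2_umin; repeat split; lra.
Qed.

End FeasibilityAtUmin.

Theorem theorem3
  (L phi delta k2 umin uimax dt ti0 : R) (k : nat)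
  (c1 c2 : R -> R)
  (xi vi ui xp vp up : R -> R)
  (* constants *)
  (HL : 0 < L) (Hphi : 0 < phi) (Hk2 : 0 < k2) (Hdt : 0 < dt)
  (Hbounds : umin < 0 < uimax) (Humin : umin <= 0)
  (* x_i in [0, L] *)
  (Hx : forall s, 0 <= xi s <= L)
  (* v_i >= 0 at all times considered *)
  (Hv : forall s, 0 <= vi s)
  (* (A1) common minimum acceleration *)
  (HA1 : forall s, umin <= up s)
  (* (SA) sampling / forward invariance, at the sampling instants
     s = ti0 + n dt, with the time derivatives evaluated under the applied
     controls: bdot_2 + k2 b_2 = b_cbf2(u_i), bdot_F + k2 b_F = eta_2(u_i) + k2 b_cbf2(u_i),
     bdot_eta2 + k2 b_eta2 = eta_2(u_i) *)
  (HSA2 : forall n : nat, let s := ti0 + INR n * dt in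
      0 <= b2 (phi / L) delta xi vi xp s ->
      0 <= bcbf2 (phi / L) delta k2 xi vi xp vp s (ui s) ->
      0 <= b2 (phi / L) delta xi vi xp (s + dt))
  (HSAF : forall n : nat, let s := ti0 + INR n * dt in
      0 <= bF (phi / L) delta k2 umin xi vi xp vp s ->
      0 <= eta2 (phi / L) k2 umin xi vi vp up s (ui s)
           + k2 * bcbf2 (phi / L) delta k2 xi vi xp vp s (ui s) ->
      0 <= bF (phi / L) delta k2 umin xi vi xp vp (s + dt))
  (HSAeta : forall n : nat, let s := ti0 + INR n * dt in
      0 <= beta2 (phi / L) umin xi vi vp s ->
      0 <= eta2 (phi / L) k2 umin xi vi vp up s (ui s) ->
      0 <= beta2 (phi / L) umin xi vi vp (s + dt))
  (* control held constant on each sampling interval *)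
  (Hhold : forall n : nat, forall s, ti0 + INR n * dt <= s < ti0 + INR n * dt + dt ->
      ui s = ui (ti0 + INR n * dt))
  (* hypotheses at t = ti0 + k dt *)
  (Hbeta : 0 <= beta2 (phi / L) umin xi vi vp (ti0 + INR k * dt))
  (Hfeas : QP2_feasible (phi / L) delta k2 umin uimax c1 c2 xi vi xp vp up
             (ti0 + INR k * dt))
  (Happlied : QP2_feasible_point (phi / L) delta k2 umin uimax c1 c2 xi vi xp vp up
             (ti0 + INR k * dt) (ui (ti0 + INR k * dt))) :
  QP2_feasible (phi / L) delta k2 umin uimax c1 c2 xi vi xp vp up
    (ti0 + INR k * dt + dt).
Proof.
  destruct Happlied as [e [Hcbf [Hu [Heta _]]]].
  set (t := ti0 + INR k * dt) in *.
  assert (Hphi2 : 0 <= phi / L) by (apply Rlt_le, Rdiv_lt_0_compat; lra).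
  assert (HbF : 0 <= bF (phi / L) delta k2 umin xi vi xp vp t).
  { eapply Rle_trans; [exact Hcbf|]. apply bcbf2_le_bF; [lra | apply Hx | lra]. }
  assert (HbF_next : 0 <= bF (phi / L) delta k2 umin xi vi xp vp (t + dt)).
  { apply (HSAF k); [exact HbF|].
    assert (0 <= k2 * bcbf2 (phi / L) delta k2 xi vi xp vp t (ui t))
      by (apply Rmult_le_pos; lra).
    cbv zeta; fold t; lra. }
  assert (Hbeta_next : 0 <= beta2 (phi / L) umin xi vi vp (t + dt))
    by (apply (HSAeta k); assumption).
  apply QP2_feasible_of_umin; [lra | exact HbF_next |].
  apply eta2_umin_nonneg; auto; lra.
Qed.
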